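(* Let $r,s,t\in[0,1]$. (i) If $s\prec r\prec t$, then $d(s,t)\ge\min(x_r^t,\Delta_r-x_r^t)$. (ii) If $s<t$, then $d(s,t)\le X^{\mathrm{exc}}_s+X^{\mathrm{exc}}_{t-}-2I_s^t$.
   Context: Fix $\alpha\in(1,2)$. Let $X$ be the spectrally positive $\alpha$-stable Lévy process with $\mathbb{E}[e^{-\lambda X_t}]=e^{t\lambda^\alpha}$ ($\lambda>0$). With $\underline g_1=\sup\{s\le1:X_s=\inf_{[0,s]}X\}$ and $\underline d_1=\inf\{s>1:X_s=\inf_{[0,s]}X\}$, the normalized excursion is $X^{\mathrm{exc}}_s=(\underline d_1-\underline g_1)^{-1/\alpha}(X_{\underline g_1+s(\underline d_1-\underline g_1)}-X_{\underline g_1})$, $s\in[0,1]$. Write $\Delta_t=X^{\mathrm{exc}}_t-X^{\mathrm{exc}}_{t-}$ for $t\in(0,1]$, $\Delta_0=0$, $X^{\mathrm{exc}}_{0-}=0$, $I_s^t=\inf_{[s,t]}X^{\mathrm{exc}}$. For $s,t\in[0,1]$: $s\preccurlyeq t$ iff $s\le t$ and $X^{\mathrm{exc}}_{s-}\le I_s^t$; $s\prec t$ iff $s\preccurlyeq t$ and $s\ne t$; $s\wedge t$ is the most recent common ancestor of $s,t$ for $\preccurlyeq$. For $s\preccurlyeq t$, $x_s^t=I_s^t-X^{\mathrm{exc}}_{s-}\in[0,\Delta_s]$. For $a,b\in[0,\Delta_t]$, $\delta_t(a,b)=\min(|a-b|,\Delta_t-|a-b|)$. For $s\preccurlyeq t$,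 $d_0(s,t)=\sum_{s\prec r\preccurlyeq t}\delta_r(0,x_r^t)$; for all $s,t$, $d(s,t)=\delta_{s\wedge t}(x^s_{s\wedge t},x^t_{s\wedge t})+d_0(s\wedge t,s)+d_0(s\wedge t,t)$. *)

From HB Require Import structures.
From mathcomp Require Import all_boot all_order all_algebra.
From mathcomp Require Import all_classical all_reals all_analysis.
Set Implicit Arguments. Unset Strict Implicit. Unset Printing Implicit Defensive.
Import Order.TTheory GRing.Theory Num.Theory.
Import numFieldNormedType.Exports.
Local Open Scope classical_set_scope.
Local Open Scope ring_scope.

Section PathDefs.
Variable R : realType.
Implicit Types (e f : R -> R) (s t u r v a b : R).

Definition Iinf f s t : R := inf [set f u | u in `[s, t]].

Definition lft f t : R := if t == 0 then 0 else lim (f x @[x --> t^'-]).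

Definition jmp f t : R := if t == 0 then 0 else f t - lft f t.

Definition anc f s t : Prop :=
  [/\ 0 <= s, t <= 1, s <= t & lft f s <= Iinf f s t].

Definition sanc f s t : Prop := anc f s t /\ s <> t.

Definition mrca f s t : R :=
  xget 0 [set u | anc f u s /\ anc f u t /\
                  (forall v, anc f v s -> anc f v t -> anc f v u)].

Definition xpos f s t : R := Iinf f s t - lft f s.

Definition ldelta f t a b : R := Num.min `|a - b| (jmp f t - `|a - b|).

Definition d0 f s t : \bar R :=
  (\esum_(r in [set r | sanc f s r /\ anc f r t]) (ldelta f r 0 (xpos f r t))%:E)%E.

Definition ldist f s t : \bar R :=
  let u := mrca f s t in
  ((ldelta f u (xpos f u s) (xpos f u t))%:E + d0 f u s + d0 f u t)%E.

Definition runinf f s : R := Iinf f 0 s.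
Definition gone f : R := sup [set s | 0 <= s <= 1 /\ f s = runinf f s].
Definition done_ f : R := inf [set s | 1 < s /\ f s = runinf f s].

Definition normexc (alpha : R) f : R -> R := fun s =>
  (done_ f - gone f) `^ (- alpha^-1) *
  (f (gone f + s * (done_ f - gone f)) - f (gone f)).
End PathDefs.

Section ProcessDefs.
Local Open Scope ereal_scope.
Context {R : realType} {d : measure_display} {T : measurableType d}.

Definition mutually_indep (P : probability T R) (n : nat) (Y : 'I_n -> T -> R) : Prop :=
  forall B : 'I_n -> set R, (forall i, measurable (B i)) ->
    P (\bigcap_(i in [set: 'I_n]) (Y i @^-1` B i)) = \prod_(i < n) P (Y i @^-1` B i).

(* X is the spectrally positive alpha-stable Levy process with
   E[exp(-lambda X_t)] = exp(t lambda^alpha); we take a cadlag version. *)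
Definition stable_spos_levy (alpha : R) (P : probability T R) (X : R -> T -> R) : Prop :=
  (forall w, X 0%R w = 0%R) /\
      (forall t, measurable_fun setT (X t)) /\
      (forall w t, (0 <= t)%R -> X^~ w x @[x --> t^'+] --> X t w) /\
      (forall w t, (0 < t)%R -> cvg (X^~ w x @[x --> t^'-])) /\
      (forall n (ts : 'I_n.+1 -> R), (0 <= ts ord0)%R ->
          (forall i j : 'I_n.+1, (i <= j)%N -> (ts i <= ts j)%R) ->
          mutually_indep P (fun i : 'I_n => fun w =>
             (X (ts (lift ord0 i)) w - X (ts (widen_ord (leqnSn n) i)) w)%R)) /\
      (forall s t (B : set R), (0 <= s)%R -> (0 <= t)%R -> measurable B ->
          P [set w | (X (s + t) w - X s w)%R \in B] = P [set w | X t w \in B]) /\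
      (forall t lam, (0 <= t)%R -> (0 < lam)%R ->
          \int[P]_w (expR (- (lam * X t w)))%:E = (expR (t * lam `^ alpha))%:E).
End ProcessDefs.

From HB Require Import structures.
From mathcomp Require Import all_boot all_order all_algebra.
From mathcomp Require Import all_classical all_reals all_analysis.
From mathcomp Require Import ring lra.
Import Order.TTheory GRing.Theory Num.Theory.
Import numFieldNormedType.Exports.
Set Implicit Arguments. Unset Strict Implicit. Unset Printing Implicit Defensive.
Local Open Scope classical_set_scope.
Local Open Scope ring_scope.

(* Everything holds path by path. The normalized excursion is a nonnegative multiple
   of an affine time change of a cadlag path, so on [0, 1] it vanishes at 0, is
   bounded below, has left limits, and is right-continuous (or, when the junk values
   of g_1 and d_1 reverse time, left-continuous and hence without jumps).
   (i) If s < r < t in the genealogy, then s is the most recent common ancestor of s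
   and t, all terms of d(s, t) are nonnegative, and the summand of d_0(s, t) at r is
   delta_r(0, x_r^t) = min(x_r^t, Delta_r - x_r^t).
   (ii) Along ancestors r_1 < ... < r_n of t one has X_{r_(i+1)-} >= I_{r_i}^t, so the
   x_{r_i}^t telescope: d_0(u, t) <= X_{t-} - I_u^t and d_0(u, s) <= X_s - I_u^s.
   For u = s /\ t, maximality and right continuity give I_u^t = I_s^t, and
   delta_u <= x_u^s - x_u^t = I_u^s - I_u^t; the three bounds add up to
   X_s + X_{t-} - 2 I_s^t. *)

Section Preliminaries.
Variable R : realType.

Definition lbounded_on (f : R -> R) a b := exists M, forall x, a <= x <= b -> M <= f x.

Lemma near_at_left_itv (a : R) (P : R -> Prop) : (\forall x \near a^'-, P x) ->
  exists2 d, 0 < d & forall x, a - d < x < a -> P x.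
Proof.
rewrite near_withinE => /nbhs_ballP [d /= d0 H]; exists d => // x /andP[h1 h2].
apply: H => //; rewrite /ball /= gtr0_norm ?subr_gt0 //.
by rewrite ltrBlDr -ltrBlDl.
Qed.

Lemma near_at_right_itv (a : R) (P : R -> Prop) : (\forall x \near a^'+, P x) ->
  exists2 d, 0 < d & forall x, a < x < a + d -> P x.
Proof.
rewrite near_withinE => /nbhs_ballP [d /= d0 H]; exists d => // x /andP[h1 h2].
apply: H => //; rewrite /ball /= ltr0_norm ?subr_lt0 // opprB.
by rewrite ltrBlDl.
Qed.

(* An [esum] is a supremum over finite subfamilies, including the empty one. *)
Lemma esum_ge0_any (S : set R) (a : R -> \bar R) : (0 <= \esum_(i in S) a i)%E.
Proof. by apply: esum_ge; exists set0; [exact: fsets_set0|rewrite fsbig_set0]. Qed.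

Lemma esum_le0 (S : set R) (a : R -> \bar R) :
  (forall r, S r -> (a r <= 0)%E) -> (\esum_(i in S) a i <= 0)%E.
Proof.
move=> H; apply: ge_ereal_sup => _ [A [finA AS] <-].
by apply: fsume_le0 => r Ar; apply: H; apply: AS.
Qed.

Lemma esum_empty (S : set R) (a : R -> \bar R) :
  (forall r, ~ S r) -> \esum_(i in S) a i = 0%E.
Proof.
by move=> H; rewrite (_ : S = set0) ?esum_set0 //; apply/predeqP => r; split => // /H.
Qed.

End Preliminaries.

Section Genealogy.
Variable R : realType.
Variable e : R -> R.

Definition left_lims := forall t, 0 < t <= 1 -> cvg (e x @[x --> t^'-]).

Hypothesis e_lb : lbounded_on e 0 1.
Hypothesis e_ll : left_lims.

Lemma Iinf_le s t x : 0 <= s -> t <= 1 -> s <= x <= t -> Iinf e s t <= e x.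
Proof.
move=> s0 t1 /andP[sx xt]; have [M HM] := e_lb; rewrite /Iinf.
have : has_lbound [set e u | u in `[s, t]].
  exists M => _ [u /= + <-]; rewrite in_itv /= => /andP[su ut].
  by apply: HM; rewrite (le_trans s0 su) (le_trans ut t1).
by move/ge_inf; apply; exists x => //=; rewrite in_itv /= sx xt.
Qed.

Lemma Iinf_le_l s t : 0 <= s -> s <= t -> t <= 1 -> Iinf e s t <= e s.
Proof. by move=> s0 st t1; apply: Iinf_le => //; rewrite lexx st. Qed.

Lemma Iinf_le_r s t : 0 <= s -> s <= t -> t <= 1 -> Iinf e s t <= e t.
Proof. by move=> s0 st t1; apply: Iinf_le => //; rewrite lexx st. Qed.

Lemma lb_le_Iinf s t B : s <= t -> (forall x, s <= x <= t -> B <= e x) ->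
  B <= Iinf e s t.
Proof.
move=> st H; apply: lb_le_inf; first by exists (e s), s => //=; rewrite in_itv /= lexx st.
by move=> _ [u /= + <-]; rewrite in_itv /= => /H.
Qed.

Lemma Iinf_lt_exists s t B : s <= t -> Iinf e s t < B ->
  exists2 x, s <= x <= t & e x < B.
Proof.
move=> st; apply: contraPP => /forall2NP Hn; apply/negP; rewrite -leNgt.
by apply: lb_le_Iinf => // x xst; case: (Hn x) => [//|/negP]; rewrite -leNgt.
Qed.

Lemma Iinfxx s : 0 <= s <= 1 -> Iinf e s s = e s.
Proof.
move=> /andP[s0 s1]; apply/le_anti; rewrite Iinf_le_l //=.
by apply: lb_le_Iinf => // x /andP[a b]; rewrite (@le_anti _ _ x s) ?a ?b.
Qed.

Lemma Iinf_subitv a a' b' b : 0 <= a -> a <= a' -> a' <= b' -> b' <= b -> b <= 1 ->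
  Iinf e a b <= Iinf e a' b'.
Proof.
move=> a0 aa ab bb b1; apply: lb_le_Iinf => // x /andP[ax xb].
by apply: Iinf_le => //; rewrite (le_trans aa ax) (le_trans xb bb).
Qed.

Lemma Iinf_split a b c : 0 <= a -> a <= b -> b <= c -> c <= 1 ->
  Iinf e a c = Num.min (Iinf e a b) (Iinf e b c).
Proof.
move=> a0 ab bc c1; apply/le_anti/andP; split.
  by rewrite le_min !Iinf_subitv ?lexx // (le_trans bc c1, le_trans a0 ab).
apply: lb_le_Iinf => [|x /andP[ax xc]]; first exact: le_trans bc.
rewrite ge_min; have [xb|bx] := leP x b.
  by rewrite (@Iinf_le a b x) ?ax ?xb ?(le_trans bc c1).
by rewrite (@Iinf_le b c x) ?orbT ?(ltW bx) ?xc ?(le_trans a0 ab).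
Qed.

Lemma lb_le_lft u r B : u < r -> 0 < r <= 1 ->
  (forall x, u < x < r -> B <= e x) -> B <= lft e r.
Proof.
move=> ur /andP[r0 r1] H; rewrite /lft gt_eqF //.
apply: limr_ge; first by apply: e_ll; rewrite r0 r1.
near=> x; apply: H; apply/andP; split; near: x.
  exact: nbhs_left_gt.
exact: nbhs_left_lt.
Unshelve. all: by end_near.
Qed.

Lemma Iinf_le_lft u r : 0 <= u -> u < r -> r <= 1 -> Iinf e u r <= lft e r.
Proof.
move=> u0 ur r1; apply: (@lb_le_lft u) => //; first by rewrite r1 (le_lt_trans u0 ur).
by move=> x /andP[ux xr]; apply: Iinf_le => //; rewrite !ltW.
Qed.

(* The summand of [d0 e u t] at [r = t] is [ldelta e t 0 (jmp e t) <= 0]. *)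
Definition xpos0 t r := if r == t then 0 else xpos e r t.

Lemma ldelta_xpos0_le u r t : 0 <= u -> u < r -> anc e r t ->
  ldelta e r 0 (xpos e r t) <= xpos0 t r.
Proof.
move=> u0 ur [r0 t1 rt hr]; have rn0 : r != 0 by rewrite gt_eqF // (le_lt_trans u0 ur).
rewrite /ldelta /xpos0 ge_min sub0r normrN; case: eqP => [rE|_].
  rewrite -rE /jmp /xpos (negbTE rn0) Iinfxx ?r0 ?(le_trans rt t1) //.
  by rewrite subr_le0 ler_norm orbT.
by rewrite ger0_norm ?lexx // /xpos subr_ge0.
Qed.

(* Telescoping: along an increasing chain of ancestors of [t], each [lft e r]
   dominates the running infimum reached at the previous element. *)
Lemma sum_xpos0_le t B (l : seq R) : t <= 1 ->
  (forall w, 0 <= w -> w < t -> Iinf e w t <= B) -> sorted <%O l ->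
  forall w, 0 <= w -> w < t -> (forall r, r \in l -> w < r <= t) ->
  \sum_(r <- l) xpos0 t r <= B - Iinf e w t.
Proof.
move=> t1 HB; elim: l => [|r l IH] srt w w0 wt Hl.
  by rewrite big_nil subr_ge0 HB.
rewrite big_cons; have /andP[wr rt] := Hl r (mem_head _ _).
have /allP lt_r : all (fun x => r < x) l.
  by apply: order_path_min => //; exact: lt_trans.
have [rE|rt'] := eqVneq r t.
  have -> : l = [::].
    case: l {IH srt Hl} lt_r (Hl) => // a l lt_r Hl.
    have /andP[_ at'] : w < a <= t by apply: Hl; rewrite !inE eqxx orbT.
    by have := lt_r a (mem_head _ _); rewrite rE ltNge at'.
  by rewrite /xpos0 rE eqxx big_nil addr0 subr_ge0 HB.
have r_lt_t : r < t by rewrite lt_neqAle rt' rt.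
have r0 : 0 <= r by rewrite ltW // (le_lt_trans w0 wr).
have Hl' r' : r' \in l -> r < r' <= t.
  move=> r'l; rewrite lt_r //=.
  by have /andP[] : w < r' <= t by apply: Hl; rewrite inE r'l orbT.
have := IH (path_sorted srt) r r0 r_lt_t Hl'.
have : Iinf e w t <= lft e r.
  apply: le_trans (Iinf_le_lft w0 wr (le_trans rt t1)).
  by apply: Iinf_subitv => //; rewrite ltW.
rewrite /xpos0 (negbTE rt') /xpos; lra.
Qed.

Lemma d0_le u t B : 0 <= u -> t <= 1 ->
  (forall w, 0 <= w -> w < t -> Iinf e w t <= B) -> Iinf e u t <= B ->
  (d0 e u t <= (B - Iinf e u t)%:E)%E.
Proof.
move=> u0 t1 HB HuB; apply: ge_ereal_sup => _ [A [finA AD] <-].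
rewrite fsbig_finite //=; set l := finmap.enum_fset _.
have Hl r : r \in l -> [/\ u < r, r <= t & anc e r t].
  rewrite /l in_fset_set // inE => /AD [[[_ _ ur _] unr] art].
  by split => //; [rewrite lt_neqAle ur andbT; apply/eqP|case: art].
rewrite -(perm_big _ (permEl (perm_sort <=%O l))) big_seq.
apply: (@le_trans _ _ (\sum_(r <- sort <=%O l | r \in sort <=%O l) (xpos0 t r)%:E)%E).
  apply: lee_sum => r; rewrite mem_sort => /Hl [ur _ art].
  by rewrite lee_fin (ldelta_xpos0_le u0 ur art).
rewrite -big_seq sumEFin lee_fin; have [ut|tu] := ltP u t.
  apply: sum_xpos0_le => //; first by rewrite sort_lt_sorted finmap.fset_uniq.
  by move=> r; rewrite mem_sort => /Hl [ur rt _]; rewrite ur rt.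
case E : (sort <=%O l) => [|a s]; first by rewrite big_nil subr_ge0.
have : a \in sort <=%O l by rewrite E mem_head.
rewrite mem_sort => /Hl [ua at' _].
by have := lt_le_trans ua (le_trans at' tu); rewrite ltxx.
Qed.

Lemma lft0 : lft e 0 = 0.
Proof. by rewrite /lft eqxx. Qed.

Hypothesis e0 : e 0 = 0.

Lemma jmpE s : jmp e s = e s - lft e s.
Proof. by rewrite /jmp /lft; case: eqP => [->|]; rewrite ?e0 ?subr0. Qed.

Lemma anc_trans s r t : anc e s r -> s <> r -> anc e r t -> anc e s t.
Proof.
move=> [s0 r1 sr hs] nsr [r0 t1 rt hr].
have slr : s < r by rewrite lt_neqAle sr andbT; apply/eqP.
split => //; first exact: le_trans rt.
rewrite (Iinf_split s0 sr rt t1) le_min hs /=.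
by apply: le_trans hs (le_trans (Iinf_le_lft s0 slr r1) hr).
Qed.

Lemma mrca_ancl s t : anc e s t -> mrca e s t = s.
Proof.
move=> ast; have [s0 t1 st hs] := ast; have s1 := le_trans st t1.
have ass : anc e s s.
  by split; rewrite ?lexx // Iinfxx ?s0 // (le_trans hs (Iinf_le_l s0 st t1)).
apply: xget_unique; first by split => // v.
move=> y [[_ _ ys _] [_ H]]; have [_ _ sy _] := H s ass ast.
by apply/le_anti; rewrite ys sy.
Qed.

Lemma min_xpos_le_ldist r s t : sanc e s r -> sanc e r t ->
  ((Num.min (xpos e r t) (jmp e r - xpos e r t))%:E <= ldist e s t)%E.
Proof.
move=> [asr nsr] [art nrt]; have ast := anc_trans asr nsr art.
have [s0 r1 sr hs] := asr; have [r0 t1 rt hr] := art; have [_ _ st hst] := ast.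
have s1 := le_trans sr r1.
rewrite /ldist /= mrca_ancl //; apply: lee_paddl.
  apply: adde_ge0; last exact: esum_ge0_any.
  have Ist := Iinf_le_l s0 st t1.
  rewrite lee_fin /ldelta /xpos jmpE Iinfxx ?s0 //.
  rewrite (_ : _ - _ - _ = e s - Iinf e s t); last by ring.
  rewrite ger0_norm ?subr_ge0 // le_min subr_ge0 Ist /=.
  by rewrite (_ : _ - _ - _ = Iinf e s t - lft e s) ?subr_ge0 //; ring.
apply: esum_ge; exists [set r]; first by split=> [|_ ->]; [exact: finite_set1|].
by rewrite fsbig_set1 lee_fin /ldelta sub0r normrN ger0_norm // /xpos subr_ge0.
Qed.

(* Ancestors of [t] are closed under suprema: approaching [sup C] from the left,
   the left limits at points of [C] tend to [lft e (sup C)]. *)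
Lemma lft_le_Iinf_sup (C : set R) b t : C !=set0 -> ubound C b -> b <= t -> t <= 1 ->
  (forall c, C c -> 0 <= c /\ lft e c <= Iinf e c t) ->
  lft e (sup C) <= Iinf e (sup C) t.
Proof.
move=> [c Cc] ubC bt t1 HC; have hsC : has_sup C by split; [exists c|exists b].
have leC := ub_le_sup hsC.2; set us := sup C in leC *.
have usb : us <= b by apply: ge_sup ubC; exists c.
have us1 := le_trans usb (le_trans bt t1).
have c0 := (HC c Cc).1.
have [Cus|nCus] := pselect (C us); first exact: (HC us Cus).2.
have c'lt c' : C c' -> c' < us.
  by move=> Cc'; rewrite lt_neqAle leC // andbT; apply: contra_not_neq nCus => <-.
have usp : 0 < us := le_lt_trans c0 (c'lt c Cc).
rewrite leNgt; apply/negP => Hlt.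
have Lcv : e x @[x --> us^'-] --> lft e us.
  by rewrite /lft (gt_eqF usp); apply: e_ll; rewrite usp us1.
set J := Iinf e us t in Hlt *; set L := lft e us in Hlt Lcv *.
have KL : (J + L) / 2 < L by lra.
have [d d_gt0 Hd] := near_at_left_itv (cvgr_gt L Lcv ((J + L) / 2) KL).
have d'0 : 0 < Num.min d us by rewrite lt_min d_gt0 usp.
have [c' Cc' c'd] := sup_adherent d'0 hsC.
have c'0 : 0 < c' by apply: le_lt_trans c'd; rewrite subr_ge0 ge_min lexx orbT.
have K1 : (J + L) / 2 <= lft e c'.
  apply: (@lb_le_lft (us - Num.min d us)) => //.
    by rewrite c'0 ltW ?(lt_le_trans (c'lt _ Cc')).
  move=> x /andP[h1 h2]; apply/ltW/Hd; rewrite (lt_trans h2 (c'lt _ Cc')) andbT.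
  by apply: le_lt_trans h1; rewrite lerD2l lerN2 ge_min lexx.
have K2 : lft e c' <= J.
  apply: le_trans (HC c' Cc').2 _; apply: Iinf_subitv => //.
  - exact: ltW.
  - exact: ltW (c'lt _ Cc').
  - exact: le_trans usb bt.
lra.
Qed.

Definition common_anc s t v := anc e v s /\ anc e v t.

Lemma mrca_spec s t : 0 <= s -> s <= t -> t <= 1 ->
  ((forall v, ~ common_anc s t v) /\ mrca e s t = 0) \/
  (common_anc s t (mrca e s t) /\ forall v, common_anc s t v -> v <= mrca e s t).
Proof.
move=> s0 st t1; have s1 := le_trans st t1.
have [[c Cc]|nC] := pselect (exists v, common_anc s t v); last first.
  left; split; first by move=> v Cv; apply: nC; exists v.
  by apply: xgetPN => v [hs [ht _]]; apply: nC; exists v.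
right; set C := common_anc s t.
have ubC : ubound C s by move=> v [[_ _ vs _] _].
have leC v : C v -> v <= sup C by move=> Cv; apply: ub_le_sup => //; exists s.
have us0 : 0 <= sup C by have [[c0 _ _ _] _] := Cc; exact: le_trans c0 (leC c Cc).
have uss : sup C <= s by apply: ge_sup => //; exists c.
have Lu : lft e (sup C) <= Iinf e (sup C) t.
  apply: (lft_le_Iinf_sup _ ubC st t1); first by exists c.
  by move=> v [[v0 _ _ _] [_ _ _ hv]].
have ancv v : C v -> anc e v (sup C).
  move=> Cv; have [_ [v0 _ _ hv]] := Cv; split; rewrite ?leC ?(le_trans uss s1) //.
  by apply: le_trans hv (Iinf_subitv _ _ _ _ _); rewrite ?leC ?(le_trans uss st).
have Cu : C (sup C).
  split; split; rewrite ?(le_trans uss st) //.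
  by apply: le_trans Lu _; apply: Iinf_subitv.
have /(_ _) [|A [B D]] := @xgetPex _ 0 [set u | anc e u s /\ anc e u t /\
    (forall v, anc e v s -> anc e v t -> anc e v u)].
  by exists (sup C); split; [case: Cu|split; [case: Cu|move=> v hs ht; apply: ancv]].
split; first by [].
by move=> v [Cv1 Cv2]; have [_ _ ->] := D v Cv1 Cv2.
Qed.

Definition right_cont01 := forall t, 0 <= t < 1 -> e x @[x --> t^'+] --> e t.
Definition left_cont01 := forall t, 0 < t <= 1 -> lft e t = e t.

(* The witness is the last time in [[u, s]] at which [e] is below [m]. *)
Lemma last_passage_below u s m : right_cont01 -> 0 <= u -> s <= 1 -> m <= e s ->
  (exists2 w, u <= w <= s & e w < m) ->
  exists2 v, u < v <= s & m <= Iinf e v s /\ lft e v <= m.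
Proof.
move=> rc u0 s1 mes [w /andP[uw ws] ewm].
set W := fun v => u <= v <= s /\ e v < m.
have Ww : W w by split; rewrite ?uw.
have hsW : has_sup W by split; [exists w|exists s => v [/andP[_ ->]]].
have leW := ub_le_sup hsW.2; set v := sup W in leW *.
have wv : w <= v := leW _ Ww.
have vs : v <= s by apply: ge_sup hsW.1 _ => x [/andP[_ ->]].
have v0 := le_trans u0 (le_trans uw wv).
have above x : v < x <= s -> m <= e x.
  move=> /andP[vx xs]; rewrite leNgt; apply/negP => exm.
  have Wx : W x by split; rewrite // xs (le_trans uw (le_trans wv (ltW vx))).
  by move: (leW _ Wx); rewrite leNgt vx.
have mev : m <= e v.
  rewrite leNgt; apply/negP => evm.
  have vs' : v < s.
    by rewrite lt_neqAle vs andbT; apply: contraTneq evm => ->; rewrite -leNgt.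
  have rcv : e x @[x --> v^'+] --> e v by apply: rc; rewrite v0 (lt_le_trans vs' s1).
  have [d d_gt0 Hd] := near_at_right_itv (cvgr_lt (e v) rcv m evm).
  set x := v + Num.min d (s - v) / 2.
  have hx : 0 < Num.min d (s - v) by rewrite lt_min d_gt0 subr_gt0.
  have /andP[vx xs] : v < x < v + Num.min d (s - v) by rewrite /x; lra.
  have xd : x < v + d by apply: lt_le_trans xs _; rewrite lerD2l ge_min lexx.
  have xs' : x <= s by apply/ltW/(lt_le_trans xs); rewrite -lerBrDl ge_min lexx orbT.
  by have := above x; rewrite vx xs' => /(_ isT); rewrite leNgt Hd // vx xd.
have wltv : w < v.
  by rewrite lt_neqAle wv andbT; apply: contraTneq ewm => ->; rewrite -leNgt.
exists v; first by rewrite (le_lt_trans uw wltv) vs.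
split.
  apply: lb_le_Iinf => // x /andP[vx xs].
  by have [<-|nvx] := eqVneq v x; rewrite // above // lt_neqAle nvx vx.
rewrite leNgt; apply/negP => Hm; have vp := le_lt_trans (le_trans u0 uw) wltv.
have Lcv : e x @[x --> v^'-] --> lft e v.
  by rewrite /lft (gt_eqF vp); apply: e_ll; rewrite vp (le_trans vs s1).
have [d d_gt0 Hd] := near_at_left_itv (cvgr_gt _ Lcv m Hm).
have [w' Ww' w'd] := sup_adherent d_gt0 hsW; have ew'm := Ww'.2.
have w'v : w' < v.
  by rewrite lt_neqAle leW // andbT; apply: contraTneq ew'm => ->; rewrite -leNgt.
by have := Hd w'; rewrite w'd w'v => /(_ isT) /ltW; rewrite leNgt ew'm.
Qed.

Lemma Iinf_mrca s t u : right_cont01 -> 0 <= s -> s <= t -> t <= 1 ->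
  common_anc s t u -> (forall v, common_anc s t v -> v <= u) ->
  Iinf e u t = Iinf e s t.
Proof.
move=> rc s0 st t1 [[u0 s1 us hus] [_ _ ut hut]] umax.
apply/le_anti; rewrite Iinf_subitv //=; set m := Iinf e s t.
rewrite leNgt; apply/negP => Hlt.
have Hus : Iinf e u s < m.
  by move: Hlt; rewrite (Iinf_split u0 us st t1) gt_min ltxx orbF.
have [v /andP[uv vs] [mv lvm]] :=
  last_passage_below rc u0 s1 (Iinf_le_l s0 st t1) (Iinf_lt_exists us Hus).
have v0 := le_trans u0 (ltW uv).
have Cv : common_anc s t v.
  split; split; rewrite ?(le_trans vs st) //; first exact: le_trans lvm mv.
  by rewrite (Iinf_split v0 vs st t1) le_min !(le_trans lvm) ?lexx.
by have := umax v Cv; rewrite leNgt uv.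
Qed.

Lemma d0_le_val u s : 0 <= u -> u <= s -> s <= 1 ->
  (d0 e u s <= (e s - Iinf e u s)%:E)%E.
Proof.
by move=> u0 us s1; apply: d0_le => // [w w0 ws|]; rewrite Iinf_le_r // ltW.
Qed.

Lemma d0_le_lft u t : 0 <= u -> u < t -> t <= 1 ->
  (d0 e u t <= (lft e t - Iinf e u t)%:E)%E.
Proof. by move=> u0 ut t1; apply: d0_le => // [w w0 wt|]; apply: Iinf_le_lft. Qed.

Lemma ldelta_xpos_le u s t : 0 <= u -> u <= s -> s <= t -> t <= 1 ->
  ldelta e u (xpos e u s) (xpos e u t) <= Iinf e u s - Iinf e u t.
Proof.
move=> u0 us st t1; rewrite /ldelta ge_min /xpos.
rewrite (_ : _ - _ - _ = Iinf e u s - Iinf e u t); last by ring.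
by rewrite ger0_norm ?lexx // subr_ge0 Iinf_subitv.
Qed.

Lemma ldelta_jmp0 u a b : jmp e u = 0 -> ldelta e u a b <= 0.
Proof. by rewrite /ldelta => ->; rewrite ge_min sub0r oppr_le0 normr_ge0 orbT. Qed.

(* [mrca] defaults to [0] when [s] and [t] have no common ancestor. *)
Lemma ldist_le_no_common_anc s t : 0 <= s -> s < t -> t <= 1 ->
  (forall v, ~ common_anc s t v) -> mrca e s t = 0 ->
  (ldist e s t <= (e s + lft e t - 2 * Iinf e s t)%:E)%E.
Proof.
move=> s0 st t1 nC m0; have ts := ltW st; have s1 := le_trans ts t1.
have t0 := le_trans s0 ts.
have Ist := Iinf_le_l s0 ts t1; have Ilt := Iinf_le_lft s0 st t1.
have I0st : Iinf e 0 t <= Iinf e 0 s by apply: Iinf_subitv.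
have d0t : d0 e 0 t = 0%E.
  apply: esum_empty => r [[a0r n0r] art]; have [_ _ _ I0t] := anc_trans a0r n0r art.
  by apply: (nC 0); split; split; rewrite ?lft0 // in I0t *; apply: le_trans I0st.
have dl0 : ldelta e 0 (xpos e 0 s) (xpos e 0 t) <= 0 by rewrite ldelta_jmp0 // /jmp eqxx.
rewrite /ldist /= m0 d0t adde0.
have [I0s|I0s] := leP 0 (Iinf e 0 s); last first.
  have -> : d0 e 0 s = 0%E.
    apply: esum_empty => r [[a0r n0r] ars]; have [_ _ _] := anc_trans a0r n0r ars.
    by rewrite lft0 leNgt I0s.
  rewrite adde0 lee_fin; lra.
have I0t : Iinf e 0 t < 0.
  by rewrite ltNge; apply/negP => h; apply: (nC 0); split; split; rewrite ?lft0.
have IE : Iinf e s t = Iinf e 0 t.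
  move: I0t; rewrite (Iinf_split (lexx 0) s0 ts t1) gt_min ltNge I0s /= => h.
  by rewrite min_r // ltW // (lt_le_trans h I0s).
apply: le_trans (leeD (lexx _) (d0_le_val (lexx 0) s0 s1)) _.
rewrite -EFinD lee_fin; rewrite -IE in I0t; lra.
Qed.

Lemma ldist_le_common_anc s t : right_cont01 -> 0 <= s -> s < t -> t <= 1 ->
  common_anc s t (mrca e s t) -> (forall v, common_anc s t v -> v <= mrca e s t) ->
  (ldist e s t <= (e s + lft e t - 2 * Iinf e s t)%:E)%E.
Proof.
move=> rc s0 st t1 Cu umax; have ts := ltW st; have s1 := le_trans ts t1.
have Iu := Iinf_mrca rc s0 ts t1 Cu umax.
rewrite /ldist /=; set u := mrca e s t in Cu umax Iu *.
have [[u0 _ us _] _] := Cu; have ut := le_lt_trans us st.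
have h0 := ldelta_xpos_le u0 us ts t1; have h1 := d0_le_val u0 us s1.
have h2 := d0_le_lft u0 ut t1; have Ilt := Iinf_le_lft s0 st t1.
apply: le_trans (leeD (leeD (lexx _) h1) h2) _.
rewrite -!EFinD lee_fin; rewrite Iu in h0 h2 *; lra.
Qed.

Lemma ldist_le_right_cont s t : right_cont01 -> 0 <= s -> s < t -> t <= 1 ->
  (ldist e s t <= (e s + lft e t - 2 * Iinf e s t)%:E)%E.
Proof.
move=> rc s0 st t1; case: (mrca_spec s0 (ltW st) t1) => [[nC m0]|[Cu umax]].
  exact: ldist_le_no_common_anc.
exact: ldist_le_common_anc.
Qed.

Lemma ldist_le_left_cont s t : left_cont01 -> 0 <= s -> s < t -> t <= 1 ->
  (ldist e s t <= (e s + lft e t - 2 * Iinf e s t)%:E)%E.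
Proof.
move=> lc s0 st t1; have ts := ltW st; have s1 := le_trans ts t1.
have Ist := Iinf_le_l s0 ts t1; have Ilt := Iinf_le_lft s0 st t1.
have jmp0 r : 0 <= r <= 1 -> jmp e r = 0.
  move=> /andP[r0 r1]; rewrite jmpE.
  have [->|rn] := eqVneq r 0; first by rewrite e0 lft0 subr0.
  by rewrite lc ?subrr // r1 andbT lt_neqAle eq_sym rn r0.
have d0le x : (d0 e (mrca e s t) x <= 0)%E.
  apply: esum_le0 => r [_ [r0 x1 rx _]].
  by rewrite lee_fin ldelta_jmp0 // jmp0 // r0 (le_trans rx x1).
have u01 : 0 <= mrca e s t <= 1.
  case: (mrca_spec s0 ts t1) => [[_ ->]|[[[u0 _ us _] _] _]].
    by rewrite lexx ler01.
  by rewrite u0 (le_trans us s1).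
have dl := ldelta_jmp0 (xpos e (mrca e s t) s) (xpos e (mrca e s t) t) (jmp0 _ u01).
rewrite /ldist /=; apply: le_trans (leeD (leeD (lexx _) (d0le s)) (d0le t)) _.
rewrite !adde0 lee_fin; lra.
Qed.

End Genealogy.

Section Rescaling.
Variable R : realType.
Implicit Types f : R -> R.

Definition cadlag f := (forall t, 0 <= t -> f x @[x --> t^'+] --> f t) /\
  (forall t, 0 < t -> cvg (f x @[x --> t^'-])).

Lemma lbounded_onW f a x y : x <= y -> lbounded_on f a y -> lbounded_on f a x.
Proof.
by move=> xy [M HM]; exists M => z /andP[az zx]; rewrite HM // az (le_trans zx xy).
Qed.

Lemma lbounded_on_left_lim f a m : a < m -> cvg (f x @[x --> m^'-]) ->
  (forall x, a <= x < m -> lbounded_on f a x) -> lbounded_on f a m.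
Proof.
move=> am /cvg_ex[L fL] H.
have L1 : L - 1 < L by rewrite ltrBlDr ltrDl.
have [d d0 Hd] := near_at_left_itv (cvgr_gt L fL (L - 1) L1).
set x0 := Num.max a (m - d / 2).
have x0m : x0 < m by rewrite gt_max am ltrBlDr ltrDl divr_gt0.
have [M HM] : lbounded_on f a x0 by apply: H; rewrite le_max lexx x0m.
exists (Num.min M (Num.min (L - 1) (f m))) => y /andP[ay ym].
have [yx0|x0y] := leP y x0; first by rewrite ge_min HM // ay.
have [->|ynm] := eqVneq y m; first by rewrite !ge_min lexx !orbT.
rewrite !ge_min (ltW (Hd y _)) ?orbT // (lt_neqAle y) ynm ym !andbT.
by apply: le_lt_trans x0y; rewrite le_max lerD2l lerN2 ler_pdivrMr // ler_pMr // ler1n orbT.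
Qed.

Lemma lbounded_on_right_cont f a m : f x @[x --> m^'+] --> f m ->
  lbounded_on f a m -> exists2 h, 0 < h & lbounded_on f a (m + h).
Proof.
move=> fm [M HM]; have fm1 : f m - 1 < f m by rewrite ltrBlDr ltrDl.
have [d d0 Hd] := near_at_right_itv (cvgr_gt (f m) fm (f m - 1) fm1).
exists (d / 2); first by rewrite divr_gt0.
exists (Num.min M (f m - 1)) => y /andP[ay ymh].
have [ym|my] := leP y m; first by rewrite ge_min HM // ay.
rewrite ge_min (ltW (Hd y _)) ?orbT // my (le_lt_trans ymh) //.
by rewrite ltrD2l ltr_pdivrMr // ltr_pMr // ltr1n.
Qed.

(* Continuity induction on [[a, b]]: the supremum of the points up to which [f] is
   bounded below is reached by the left limit, and passed by right continuity. *)
Lemma cadlag_lbounded_on f a b : 0 <= a -> a <= b -> cadlag f -> lbounded_on f a b.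
Proof.
move=> a0 ab [fr fl]; set S := [set x | a <= x <= b /\ lbounded_on f a x].
have Sa : S a.
  split; first by rewrite lexx ab.
  by exists (f a) => y /andP[ay ya]; rewrite (@le_anti _ _ y a) ?ay ?ya.
have hsS : has_sup S by split; [exists a|exists b => x [/andP[_ ->]]].
have leS := ub_le_sup hsS.2; set m := sup S in leS *.
have am : a <= m := leS _ Sa.
have mb : m <= b by apply: ge_sup hsS.1 _ => x [/andP[_ ->]].
have Sm : lbounded_on f a m.
  have [<-|am'] := eqVneq a m; first exact: Sa.2.
  have amlt : a < m by rewrite lt_neqAle am' am.
  apply: lbounded_on_left_lim amlt (fl _ (le_lt_trans a0 amlt)) _ => x /andP[ax xm].
  have [y Sy yx] : exists2 y, S y & m - (m - x) < y.
    by apply: sup_adherent; rewrite ?subr_gt0.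
  by apply: lbounded_onW Sy.2; rewrite ltW // -(subKr m x).
have [h h0 Smh] := lbounded_on_right_cont (fr _ (le_trans a0 am)) Sm.
suff mE : m = b by rewrite -mE.
apply/le_anti; rewrite mb leNgt; apply/negP => mltb.
have hm0 : 0 < Num.min h (b - m) by rewrite lt_min h0 subr_gt0.
have : S (m + Num.min h (b - m)).
  split; last by apply: lbounded_onW Smh; rewrite lerD2l ge_min lexx.
  have mle : m <= m + Num.min h (b - m) by rewrite lerDl ltW.
  by rewrite (le_trans am mle) -lerBrDl ge_min lexx orbT.
by move/leS; rewrite gerDl leNgt hm0.
Qed.

Lemma affine_within (a k t : R) (A B : set R) : (forall x, A x -> B (a + x * k)) ->
  (fun x => a + x * k) @ within A (nbhs t) `=>` within B (nbhs (a + t * k)).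
Proof.
move=> AB P HP; change (\forall x \near within A (nbhs t), P (a + x * k)).
have {HP} : \forall y \near within B (nbhs (a + t * k)), P y := HP.
rewrite !near_withinE => HP.
have aff : (fun x => a + x * k) @ t --> a + t * k.
  apply: (@cvgD _ _ _ _ _ (fun=> a) (fun x => x * k)); first exact: cvg_cst.
  by apply: cvgMr_tmp; exact: cvg_id.
have : \forall x \near t, B (a + x * k) -> P (a + x * k) := aff _ HP.
by apply: filterS => x H /AB.
Qed.

Section RescaledPath.
Variables (f : R -> R) (a k c : R).
Hypotheses (a0 : 0 <= a) (ak0 : 0 <= a + k) (c0 : 0 <= c) (f_cadlag : cadlag f).
Let e s := c * (f (a + s * k) - f a).

Lemma rescaled_path0 : e 0 = 0.
Proof. by rewrite /e mul0r addr0 subrr mulr0. Qed.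

Let affine_ge0 s : 0 <= s <= 1 -> 0 <= a + s * k.
Proof.
move=> /andP[s0 s1]; rewrite (_ : a + s * k = (1 - s) * a + s * (a + k)); last by ring.
by rewrite addr_ge0 // mulr_ge0 // subr_ge0.
Qed.

Let rescaled_cvg (F G : set_system R) l : Filter F ->
  (fun x => a + x * k) @ F `=>` G -> f x @[x --> G] --> l ->
  e x @[x --> F] --> c * (l - f a).
Proof.
move=> FF FG fl; apply: cvgMl_tmp.
by apply: (@cvgB _ _ _ _ _ _ (fun=> f a)); [exact: cvg_comp FG fl|exact: cvg_cst].
Qed.

Lemma rescaled_path_lbounded : lbounded_on e 0 1.
Proof.
have [M HM] := cadlag_lbounded_on (lexx 0) (addr_ge0 a0 (normr_ge0 k)) f_cadlag.
exists (c * (M - f a)) => s s01; rewrite /e ler_wpM2l // lerD2r HM // affine_ge0 //=.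
have /andP[s0 s1] := s01; rewrite lerD2l (le_trans (ler_norm _)) // normrM ger0_norm //.
by rewrite ler_piMl.
Qed.

Let rescaled_path_k0 : k = 0 -> e = fun=> 0.
Proof. by move=> k0; apply/funext => s; rewrite /e k0 mulr0 addr0 subrr mulr0. Qed.

Lemma rescaled_path_left_lims : left_lims e.
Proof.
move=> t /andP[t0 t1]; have [kN|kP|/rescaled_path_k0->] := ltgtP k 0.
- have atk : 0 <= a + t * k by apply: affine_ge0; rewrite (ltW t0) t1.
  apply: cvgP (rescaled_cvg _ _ (f_cadlag.1 _ atk)).
  by apply: affine_within => x; rewrite ltrD2l ltr_nM2r.
- have atk : 0 < a + t * k by rewrite ltr_wpDl // mulr_gt0.
  have /cvg_ex[l fl] := f_cadlag.2 _ atk.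
  apply: cvgP (rescaled_cvg _ _ fl).
  by apply: affine_within => x; rewrite ltrD2l ltr_pM2r.
- exact: cvgP (cvg_cst _).
Qed.

(* Time runs backwards when [k < 0], which turns right continuity into left
   continuity. *)
Lemma rescaled_path_right_or_left_cont : right_cont01 e \/ left_cont01 e.
Proof.
have [kN|kP|/rescaled_path_k0->] := ltgtP k 0.
- right => t /andP[t0 t1]; rewrite /lft gt_eqF //; apply: cvg_lim => //.
  have atk : 0 <= a + t * k by apply: affine_ge0; rewrite (ltW t0) t1.
  apply: rescaled_cvg (f_cadlag.1 _ atk).
  by apply: affine_within => x; rewrite ltrD2l ltr_nM2r.
- left => t /andP[t0 t1].
  have atk : 0 <= a + t * k by apply: affine_ge0; rewrite t0 ltW.
  apply: rescaled_cvg (f_cadlag.1 _ atk).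
  by apply: affine_within => x; rewrite ltrD2l ltr_pM2r.
- by left => t _; exact: cvg_cst.
Qed.

End RescaledPath.

Lemma gone_ge0 f : 0 <= gone f.
Proof.
rewrite /gone; have [[x Sx]|nG] := pselect (exists x, 0 <= x <= 1 /\ f x = runinf f x).
  apply: le_trans (ub_le_sup _ Sx); first by case: Sx => /andP[].
  by exists 1 => y [/andP[_ ->]].
rewrite (_ : [set _ | _] = set0) ?sup0 //.
by apply/predeqP => y; split => // hy; apply: nG; exists y.
Qed.

(* [inf set0 = 0] when the path never returns to its running infimum after time 1. *)
Lemma done_ge0 f : 0 <= done_ f.
Proof.
rewrite /done_; have [[x hx]|nD] := pselect (exists x, 1 < x /\ f x = runinf f x).
  by apply: le_trans ler01 (lb_le_inf _ _) => [|y [/ltW]]; first exists x.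
rewrite (_ : [set _ | _] = set0) ?inf0 //.
by apply/predeqP => y; split => // hy; apply: nD; exists y.
Qed.

End Rescaling.

Theorem lemma2p1 (R : realType) (alpha : R) (d : measure_display)
  (T : measurableType d) (P : probability T R) (X : R -> T -> R) :
  1 < alpha < 2 ->
  stable_spos_levy alpha P X ->
  {ae P, forall w,
    let e := normexc alpha (X^~ w) in
    forall r s t : R, 0 <= r <= 1 -> 0 <= s <= 1 -> 0 <= t <= 1 ->
      (sanc e s r -> sanc e r t ->
         (Num.min (xpos e r t) (jmp e r - xpos e r t))%:E <= ldist e s t)%E /\
      (s < t ->
         (ldist e s t <= (e s + lft e t - 2 * Iinf e s t)%:E)%E)}.
Proof.
move=> _ [_ [_ [Xrc [Xll _]]]]; apply: aeW => w r s t _ /andP[s0 _] /andP[_ t1].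
have f_cadlag : cadlag (X^~ w) by split=> u u0; [exact: Xrc|exact: Xll].
set f := X^~ w in f_cadlag *; set e := normexc alpha f.
set g := gone f; set k := done_ f - g.
have gk0 : 0 <= g + k by rewrite addrC subrK done_ge0.
have c0 : 0 <= k `^ (- alpha^-1) := powR_ge0 _ _.
have e0 : e 0 = 0 := rescaled_path0 f g k _.
have e_lb : lbounded_on e 0 1 := rescaled_path_lbounded (gone_ge0 f) gk0 c0 f_cadlag.
have e_ll : left_lims e := rescaled_path_left_lims (gone_ge0 f) gk0 f_cadlag.
split=> [|st]; first exact: min_xpos_le_ldist.
have [rc|lc] :=
  rescaled_path_right_or_left_cont (k `^ (- alpha^-1)) (gone_ge0 f) gk0 f_cadlag.
- exact: ldist_le_right_cont.
- exact: ldist_le_left_cont.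
Qed.
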